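(* Let $n\ge 4$, $N=\{1,\dots,n\}$, fix distinct $i_1,i_2\in N$ and let $\hat N^c=N\setminus\{i_1,i_2\}$. Then the inequality $$x_{i_1i_2}+\sum_{j\in\hat N^c}\left(x_{i_1j}+x_{ji_1}\right)-\sum_{j\in\hat N^c}x_{ji_2}-\sum_{j,j'\in\hat N^c:\,j\ne j'} x_{jj'}\le 2-\frac{(n-3)(n-4)}{2}$$ is a valid inequality for the weak order polytope $P^n_{WO}$, i.e. it holds for every point $x\in P^n_{WO}$.
   Context: Let $N=\{1,\dots,n\}$ and $A_N=\{(i,j): i,j\in N, i\ne j\}$. A weak order on $N$ is a binary relation $W\subseteq N\times N$ that is reflexive, transitive and total; $(i,j)\in W$ is read ''$i$ is preferred over or tied with $j$''. The characteristic vector of $W$ is $x^W\in\{0,1\}^{A_N}$ with $x^W_{(i,j)}=1$ if $(i,j)\in W$ and $0$ otherwise. The weak order polytope $P^n_{WO}$ is the convex hull of the characteristic vectors of all weak orders on $N$; its points are vectors $x\in\mathbb{R}^{A_N}$ and $x_{ij}$ denotes the coordinate $x_{(i,j)}$. *)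

From mathcomp Require Import all_boot all_order all_algebra.
Set Implicit Arguments. Unset Strict Implicit. Unset Printing Implicit Defensive.
Import Order.TTheory GRing.Theory Num.Theory.
Local Open Scope ring_scope.

(* N = {1..n} is represented by 'I_n. A binary relation is a [rel 'I_n];
   W i j = true means "i is preferred over or tied with j". *)
Definition weak_order (n : nat) (W : rel 'I_n) : Prop :=
  reflexive W /\ transitive W /\ total W.

(* Points of R^{A_N} are represented as functions x : 'I_n -> 'I_n -> R;
   only the off-diagonal coordinates x i j (i != j) are meaningful. *)

Definition in_weak_order_polytope (R : realFieldType) (n : nat)
    (x : 'I_n -> 'I_n -> R) : Prop :=
  exists (m : nat) (W : 'I_m -> rel 'I_n) (lam : 'I_m -> R),
    [/\ forall k, weak_order (W k),
        forall k, 0 <= lam k,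
        \sum_(k < m) lam k = 1 &
        forall i j : 'I_n, i != j ->
          x i j = \sum_(k < m) lam k * (W k i j)%:R].

(* By linearity it suffices to bound the left-hand side at the characteristic
   vector of a single weak order W.  Let m = |N^c|, where N^c = N \ {i1, i2},
   and let t be the number of j in N^c tied with i1.  The terms
   x_{i1 j} + x_{j i1} sum to at most m + t.  By totality every pair {j, j'}
   of N^c contributes at least 1 to the last sum, and 2 when both are tied
   with i1, so that sum is at least m(m-1)/2 + t(t-1)/2.  If i1 is weakly
   above i2, transitivity gives at least t terms x_{j i2} = 1 and the bound
   follows; otherwise what remains is t - t(t-1)/2 <= 1, i.e.
   (t-1)(t-2) >= 0 for an integer t. *)
From mathcomp Require Import all_boot all_order all_algebra.
From mathcomp Require Import lra zify.
Set Implicit Arguments. Unset Strict Implicit. Unset Printing Implicit Defensive.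
Import Order.TTheory GRing.Theory Num.Theory.

Local Open Scope ring_scope.

Definition lhs_form {R : realFieldType} {T : finType} (P : pred T) (a b : T)
    (y : T -> T -> R) : R :=
  y a b + \sum_(j | P j) (y a j + y j a) - \sum_(j | P j) y j b
  - \sum_(j | P j) \sum_(j' | P j' && (j' != j)) y j j'.

Section PairCounting.
Variable T : finType.

Lemma card_predI_sum (Q S : pred T) :
  #|[pred j | Q j && S j]| = (\sum_(j | Q j) S j)%N.
Proof.
rewrite -sum1_card big_mkcondr /=.
by apply: eq_bigr => j _; case: (S j).
Qed.

Lemma sum_offdiag_pairs (Q S : pred T) :
  (\sum_(j | Q j) \sum_(j' | Q j' && (j' != j)) (S j && S j')
     + #|[pred j | Q j && S j]| = #|[pred j | Q j && S j]| * #|[pred j | Q j && S j]|)%N.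
Proof.
rewrite card_predI_sum -big_split big_distrl /=.
apply: eq_bigr => j Qj; case Sj: (S j) => /=; last by rewrite big1.
by rewrite mul1n [in RHS](bigD1 j) //= Sj addnC.
Qed.

End PairCounting.

Section OneWeakOrder.
Variables (T : finType) (W : rel T).
Hypotheses (W_trans : transitive W) (W_total : total W).
Variables (a b : T) (P : pred T).

Let tie j := W a j && W j a.
Let m := #|P|.
Let t := #|[pred j | P j && tie j]|.

Lemma sum_comparisons_le : (\sum_(j | P j) (W a j + W j a) <= m + t)%N.
Proof.
rewrite /m /t card_predI_sum -sum1_card -big_split /=.
by apply: leq_sum => j _; rewrite /tie; case: (W a j); case: (W j a).
Qed.

Lemma ties_le_sum_below : W a b -> (t <= \sum_(j | P j) W j b)%N.
Proof.
move=> Wab; rewrite /t card_predI_sum; apply: leq_sum => j _.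
by rewrite /tie; case Wja: (W j a); rewrite ?andbF // (W_trans Wja Wab) leq_b1.
Qed.

Lemma comparisons_ge_ties j j' : (1 + (tie j && tie j') <= W j j' + W j' j)%N.
Proof.
case: (boolP (tie j && tie j')) => [/andP[/andP[Waj Wja] /andP[Waj' Wj'a]] | _].
  by rewrite (W_trans Wja Waj') (W_trans Wj'a Waj).
by move: (W_total j j'); case: (W j j'); case: (W j' j).
Qed.

Lemma pairs_le_sum :
  (m * m + t * t <= (\sum_(j | P j) \sum_(j' | P j' && (j' != j)) W j j') * 2 + m + t)%N.
Proof.
have card_P : #|[pred j | P j && predT j]| = m by apply: eq_card => j; rewrite !inE andbT.
have := sum_offdiag_pairs P predT; rewrite card_P => <-.
rewrite -(sum_offdiag_pairs P tie) -/t addnACA addnA !leq_add2r muln2 -addnn.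
rewrite [X in (_ <= _ + X)%N](exchange_big_dep P) /=; last by move=> j j' _ /andP[].
rewrite -!big_split /=; apply: leq_sum => j Pj.
rewrite [X in (_ <= _ + X)%N](eq_bigl (fun j' => P j' && (j' != j))); last first.
  by move=> j'; rewrite Pj eq_sym.
by rewrite -!big_split; apply: leq_sum => j' _; apply: comparisons_ge_ties.
Qed.

Lemma lhs_form_weak_order_le (R : realFieldType) :
  lhs_form P a b (fun i j => (W i j)%:R) <= 2 - (m%:R - 1) * (m%:R - 2) / 2 :> R.
Proof.
have t_bounds : (t <= t * t /\ 3 * t <= t * t + 2)%N by case: t => [|[|k]] //; nia.
rewrite /lhs_form; under eq_bigr do rewrite -natrD.
under [X in _ - X]eq_bigr do rewrite -natr_sum.
rewrite -!natr_sum.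
have := pairs_le_sum; have := sum_comparisons_le; move: t_bounds.
case Wab: (W a b); [move: (ties_le_sum_below Wab) |];
  rewrite -!(ler_nat R) !natrD !natrM /=.
- by move=> below_ge [t_le_sq _] cmp_le pairs_ge; lra.
- move=> [_ t_sq_bound] cmp_le pairs_ge.
  by have := ler0n R (\sum_(j | P j) W j b); lra.
Qed.

End OneWeakOrder.

Section LinearForm.
Variables (R : realFieldType) (T : finType) (P : pred T) (a b : T).

Lemma lhs_form_offdiag (y z : T -> T -> R) :
  a != b -> ~~ P a -> ~~ P b -> (forall i j, i != j -> y i j = z i j) ->
  lhs_form P a b y = lhs_form P a b z.
Proof.
move=> ab Pa Pb yz.
have [neq_a neq_b] : (forall j, P j -> j != a) /\ (forall j, P j -> j != b).
  by split=> j Pj; apply/eqP=> ja; [move: Pa | move: Pb]; rewrite -ja Pj.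
rewrite /lhs_form (yz a b) //; congr (_ + _ - _ - _).
- by apply: eq_bigr => j Pj; have ja := neq_a _ Pj; rewrite !yz // eq_sym.
- by apply: eq_bigr => j Pj; rewrite yz ?neq_b.
- by apply: eq_bigr => j _; apply: eq_bigr => j' /andP[_ j'j]; rewrite yz // eq_sym.
Qed.

Lemma lhs_form_sum (I : finType) (c : I -> R) (y : I -> T -> T -> R) :
  lhs_form P a b (fun i j => \sum_k c k * y k i j) = \sum_k c k * lhs_form P a b (y k).
Proof.
rewrite /lhs_form.
under [RHS]eq_bigr => k _ do rewrite !mulrBr !mulrDr !mulr_sumr.
rewrite !sumrB !big_split /=; congr (_ + _ - _ - _).
- rewrite [X in X + _ = _]exchange_big [X in _ + X = _]exchange_big -big_split /=.
  by apply: eq_bigr => j _; rewrite -big_split; apply: eq_bigr => k _; rewrite mulrDr.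
- by rewrite exchange_big.
- rewrite exchange_big; apply: eq_bigr => j _.
  by rewrite exchange_big; apply: eq_bigr => k _; rewrite mulr_sumr.
Qed.

End LinearForm.

Lemma convex_comb_le (R : realFieldType) (I : finType) (lam f : I -> R) (c : R) :
  (forall k, 0 <= lam k) -> \sum_k lam k = 1 -> (forall k, f k <= c) ->
  \sum_k lam k * f k <= c.
Proof.
move=> lam_ge0 lam_sum f_le; rewrite -[leRHS]mul1r -lam_sum mulr_suml.
by apply: ler_sum => k _; rewrite ler_wpM2l.
Qed.

Theorem mainTheorem3 (R : realFieldType) (n : nat) (i1 i2 : 'I_n)
    (x : 'I_n -> 'I_n -> R) :
  (4 <= n)%N -> i1 != i2 -> in_weak_order_polytope x ->
  x i1 i2
  + \sum_(j : 'I_n | j \notin [set i1; i2]) (x i1 j + x j i1)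
  - \sum_(j : 'I_n | j \notin [set i1; i2]) x j i2
  - \sum_(j : 'I_n | j \notin [set i1; i2])
      \sum_(j' : 'I_n | (j' \notin [set i1; i2]) && (j' != j)) x j j'
  <= 2 - ((n - 3) * (n - 4))%:R / 2.
Proof.
move=> n_ge4 i12 [m [W [lam [W_wo lam_ge0 lam_sum x_comb]]]].
pose P (j : 'I_n) := j \notin [set i1; i2].
have card_P : #|P| = (n - 2)%N.
  have -> : #|P| = #|~: [set i1; i2]| by apply: eq_card => j; rewrite in_setC.
  by have := cardsC [set i1; i2]; rewrite cards2 i12 card_ord /=; lia.
have rhsE : ((n - 2)%:R - 1) * ((n - 2)%:R - 2) = ((n - 3) * (n - 4))%:R :> R.
  by rewrite natrM !natrB ?(leq_trans _ n_ge4) //; lra.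
have [P_i1 P_i2] : ~~ P i1 /\ ~~ P i2 by rewrite /P !negbK !inE !eqxx ?orbT.
change (lhs_form P i1 i2 x <= 2 - ((n - 3) * (n - 4))%:R / 2).
rewrite -rhsE -card_P (lhs_form_offdiag i12 P_i1 P_i2 x_comb) lhs_form_sum.
apply: convex_comb_le => // k.
by have [_ [W_trans W_total]] := W_wo k; apply: lhs_form_weak_order_le.
Qed.
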